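(* Let $n\ge 3$ and let $C_n$ be the cycle graph on $n$ vertices. Then $hH_*^0(C_n)\cong H_*(\mathcal{M}(C_n))$, $hH_i^1(C_n)$ is $\mathbb{F}_2^2$ for $i=n-1$ and $0$ otherwise, and $hH_*^j(C_n)=0$ for $j\ge2$.
   Context: A finite simple graph $G$ is regarded as a simplicial complex of dimension at most $1$; its face poset $\mathcal{F}(G)$ is the directed graph with vertices the vertices and edges of $G$ and a directed edge $e\to v$ whenever $v$ is an endpoint of $e$. A matching on $\mathcal{F}(G)$ is a set $m$ of its edges, no two sharing an endpoint. Given $m$, reversing every edge of $m$ in $\mathcal{F}(G)$ gives a directed graph whose directed cycles (closed directed paths without repeated vertices) are said to be supported by $m$; $J(m)$ is their number, and $m$ is acyclic if $J(m)=0$. The matching complex $\mathrm{M}(G)$ has vertex set the edges of $\mathcal{F}(G)$ and simplices the nonempty matchings; $\mathcal{M}(G)$ is the subcomplex of nonempty acyclic matchings. Let $\widehat{C}_i^j(G)$ be the $\mathbb{F}_2$-vector space with basis the $i$-dimensional simplices (matchings with $i+1$ edges) $m$ with $J(m)=j$, and $\partial_J(m)$ the mod-2 sum of the sub-matchings $m\setminus\{e\}$ (for $e\in m$, $|m|\ge2$) with $J(m\setminus\{e\})=J(m)$. $hH_i^j(G)$ is the homology of $(\bigoplus\widehat{C}(G),\partial_J)$ in homological degree $i$ and filtration degree $j$. $H_*$ denotes simplicial homology with $\mathbb{F}_2$ coefficients. *)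

From mathcomp Require Import all_boot all_order all_algebra.
Set Implicit Arguments. Unset Strict Implicit. Unset Printing Implicit Defensive.
Import GRing.Theory.
Local Open Scope ring_scope.

Section FacePoset.
Variables (V : finType) (adj : rel V).

Definition gedges : {set {set V}} :=
  [set e : {set V} | [exists x, exists y, adj x y && (e == [set x; y])]].

(* Candidate arcs of the face poset F(G): a pair (e, v) stands for e -> v. *)
Definition Arc := ({set V} * V)%type.
Definition is_arc (a : Arc) : bool := (a.1 \in gedges) && (a.2 \in a.1).

Definition Node := (V + {set V})%type.

Definition is_matching (m : {set Arc}) : bool :=
  [forall a in m, is_arc a] &&
  [forall a in m, forall b in m, (a != b) ==> ((a.1 != b.1) && (a.2 != b.2))].

(* Directed graph obtained from F(G) by reversing the arcs of m. *)
Definition dedge (m : {set Arc}) (x y : Node) : bool :=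
  match x, y with
  | inr e, inl v => is_arc (e, v) && ((e, v) \notin m)
  | inl v, inr e => is_arc (e, v) && ((e, v) \in m)
  | _, _ => false
  end.

Definition arc_of_pair (x y : Node) : option Arc :=
  match x, y with
  | inr e, inl v => Some (e, v)
  | inl v, inr e => Some (e, v)
  | _, _ => None
  end.

Definition arcs_of (p : seq Node) : {set Arc} :=
  [set a : Arc | Some a \in [seq arc_of_pair xy.1 xy.2 | xy <- zip p (rot 1 p)]].

Definition is_dcycle (m : {set Arc}) (S : {set Arc}) : bool :=
  [exists k : 'I_(#|{: Node}|).+1, exists t : k.-tuple Node,
     [&& (0 < k)%N, uniq t, cycle (dedge m) t & S == arcs_of t]].

Definition J (m : {set Arc}) : nat := #|[set S : {set Arc} | is_dcycle m S]|.

Definition acyclic (m : {set Arc}) : bool := J m == 0%N.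

(* Generic F_2 chain complex whose degree-i basis is the set Bs i of
   simplices (sets of arcs with i+1 elements); the boundary of a basis
   element is the sum of its codimension-one faces lying in Bs. *)
Definition bdmx (Bs : nat -> {set {set Arc}}) (k : nat) :
    'M['F_2]_(#|Bs k.+1|, #|Bs k|) :=
  \matrix_(r < #|Bs k.+1|, c < #|Bs k|)
     ((enum_val c \subset enum_val r) : bool)%:R.

(* Dimension over F_2 of the i-th homology: dim ker d_i - dim im d_{i+1}. *)
Definition hdim (Bs : nat -> {set {set Arc}}) (i : nat) : nat :=
  (#|Bs i| - (if i is k.+1 then \rank (bdmx Bs k) else 0%N)
     - \rank (bdmx Bs i))%N.

(* Basis of \widehat C_i^j(G): matchings with i+1 arcs and J = j. *)
Definition hatC (j : nat) (i : nat) : {set {set Arc}} :=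
  [set m : {set Arc} | [&& is_matching m, #|m| == i.+1 & J m == j]].

Definition hH (i j : nat) : nat := hdim (hatC j) i.

(* i-simplices of the complex \mathcal M(G) of nonempty acyclic matchings *)
Definition acycC (i : nat) : {set {set Arc}} :=
  [set m : {set Arc} | [&& is_matching m, #|m| == i.+1 & acyclic m]].

(* dim H_i(\mathcal M(G); F_2) (unreduced simplicial homology) *)
Definition Hacyc (i : nat) : nat := hdim acycC i.

End FacePoset.

Definition cyc_adj (n : nat) : rel 'I_n :=
  fun i j => ((val j == (val i).+1 %% n) || (val i == (val j).+1 %% n))%N.
Arguments cyc_adj : clear implicits.

From mathcomp Require Import all_boot all_order all_algebra zify.
Set Implicit Arguments. Unset Strict Implicit. Unset Printing Implicit Defensive.

(* Everything rests on one structural fact: a matching m on the face poset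
   of C_n supports a directed cycle only if m is one of the two oriented
   matchings M+ = {({v, v+1}, v)} and M- = {({v, v-1}, v)}, and the cycle
   then runs through every arc of F(C_n).  Indeed, along a directed cycle a
   vertex node v is left through its unique matched arc; if that arc comes
   from the edge {v, sg v} for a rotation sg, the cycle is forced on to the
   vertex sg v, whose matched arc again comes from {sg v, sg (sg v)}.  As sg
   is transitive, m contains all n arcs ({v, sg v}, v), and a matching has
   room for no more.  Hence J(m) <= 1 for every matching, and J(m) = 1
   exactly for M+ and M-, each of which supports the obvious 2n-cycle.  So
   the basis of hH^1 is {M+, M-}, concentrated in degree n - 1, the bases of
   hH^j for j >= 2 are empty, and hH^0 is the homology of M(C_n) because
   J(m) = 0 is acyclicity. *)

Lemma mem_zip_rot1 (T : eqType) (t : seq T) x z : uniq t ->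
  ((x, z) \in zip t (rot 1 t)) = (x \in t) && (z == next t x).
Proof.
case: t => [//|y p] ut; rewrite rot1_cons.
have size_rc : size (rcons p y) = size (y :: p) by rewrite size_rcons.
apply/(nthP (y, y))/andP => [[i]|[xt /eqP ->]].
  rewrite size_zip size_rc minnn => hi; rewrite nth_zip // => -[<- <-].
  by rewrite mem_nth // next_nth mem_nth // index_uniq // nth_rcons_default.
exists (index x (y :: p)); first by rewrite size_zip size_rc minnn index_mem.
by rewrite nth_zip // nth_index // nth_rcons_default next_nth xt.
Qed.

Section DirectedCycles.
Variables (V : finType) (adj : rel V).

(* A directed cycle is the arc set of a nonempty duplicate-free closed walk
   in the modified digraph; the length bound in [is_dcycle] is automatic. *)
Lemma is_dcycleP m S :
  reflect (exists t, [/\ uniq t, cycle (dedge adj m) t, t != [::] & S = arcs_of t])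
          (is_dcycle adj m S).
Proof.
apply: (iffP existsP) => [[k /existsP [[t /= /eqP ht] /and4P [k0 ut ct /eqP ->]]]|].
  by exists t; split => //; rewrite -size_eq0 ht -lt0n.
move=> [t [ut ct tn0 ->]].
have ht : size t < #|{: Node V}|.+1 by rewrite ltnS -(card_uniqP ut) max_card.
exists (Ordinal ht); apply/existsP; exists (in_tuple t).
by rewrite /= lt0n size_eq0 tn0 ut ct eqxx.
Qed.

Lemma mem_arcs_of (t : seq (Node V)) a : uniq t ->
  reflect (exists2 x, x \in t & arc_of_pair x (next t x) = Some a) (a \in arcs_of t).
Proof.
move=> ut; rewrite inE; apply: (iffP mapP) => [[[x z]]|[x xt ha]].
  by rewrite mem_zip_rot1 // => /andP [xt /eqP ->] ha; exists x.
by exists (x, next t x); rewrite ?mem_zip_rot1 ?xt ?eqxx.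
Qed.

Lemma dcycle_next_vertex m t v : cycle (dedge adj m) t -> inl v \in t ->
  exists E, [/\ next t (inl v) = inr E, is_arc adj (E, v) & (E, v) \in m].
Proof.
move=> ct vt; move: (next_cycle ct vt).
by case: (next t (inl v)) => [//|E] /andP [ha hE]; exists E.
Qed.

Lemma dcycle_next_edge m t E : cycle (dedge adj m) t -> inr E \in t ->
  exists w, [/\ next t (inr E) = inl w, is_arc adj (E, w) & (E, w) \notin m].
Proof.
move=> ct Et; move: (next_cycle ct Et).
by case: (next t (inr E)) => [w|//] /andP [ha hn]; exists w.
Qed.

Lemma dcycle_arc m t x a : cycle (dedge adj m) t -> x \in t ->
  arc_of_pair x (next t x) = Some a -> is_arc adj a.
Proof.
move=> ct xt; move: (next_cycle ct xt).
by case: x xt => [v|E] xt; case: (next t _) => [w|E'] //= /andP [ha _] [<-].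
Qed.

Lemma matching_fst_inj m a b : is_matching adj m -> a \in m -> b \in m ->
  a.1 = b.1 -> a = b.
Proof.
move=> /andP [_ /forall_inP /(_ a) hm] am bm e.
move: (hm am) => /forall_inP /(_ b bm) /implyP h.
by case: (a =P b) => // /eqP /h; rewrite e eqxx.
Qed.

Lemma matching_snd_inj m a b : is_matching adj m -> a \in m -> b \in m ->
  a.2 = b.2 -> a = b.
Proof.
move=> /andP [_ /forall_inP /(_ a) hm] am bm e.
move: (hm am) => /forall_inP /(_ b bm) /implyP h.
by case: (a =P b) => // /eqP /h; rewrite e eqxx andbF.
Qed.

End DirectedCycles.

Lemma hdim_eq0 (V : finType) (Bs : nat -> {set {set Arc V}}) i :
  Bs i = set0 -> hdim Bs i = 0.
Proof.
move=> h0; apply/eqP; rewrite -leqn0 /hdim.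
by do 2 apply: leq_trans (leq_subr _ _) _; rewrite h0 cards0.
Qed.

(* If the basis lives in a single degree, both adjacent boundary maps vanish
   and the homology there is the whole chain group. *)
Lemma hdim_concentrated (V : finType) (Bs : nat -> {set {set Arc V}}) i :
  (forall j, j != i -> Bs j = set0) -> hdim Bs i = #|Bs i|.
Proof.
move=> hBs.
have rk_out : \rank (bdmx Bs i) = 0.
  apply/eqP; rewrite -leqn0; apply: leq_trans (rank_leq_row _) _.
  by rewrite hBs ?cards0 // gtn_eqF.
have rk_in k : i = k.+1 -> \rank (bdmx Bs k) = 0.
  move=> ik; apply/eqP; rewrite -leqn0; apply: leq_trans (rank_leq_col _) _.
  by rewrite hBs ?cards0 // ik ltn_eqF.
rewrite /hdim rk_out subn0; case: i rk_in {rk_out hBs} => [_|k rk_k].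
  by rewrite subn0.
by rewrite rk_k // subn0.
Qed.

Record orientation (n : nat) (sg : 'I_n -> 'I_n) : Prop := Orientation {
  orient_neq : forall v, sg v != v;
  orient_neq2 : forall v, sg (sg v) != v;
  orient_inj : injective sg;
  orient_adj : forall x y, cyc_adj n x y = (y == sg x) || (x == sg y);
  orient_reach : forall u v, exists k, iter k sg u = v }.

Section CyclicSuccessor.
Variable n : nat.
Hypothesis n_ge3 : 2 < n.

Lemma ordS_val (v : 'I_n) : val (ordS v) = if v.+1 == n then 0 else v.+1.
Proof.
rewrite /=; case: eqP => [->|h]; first by rewrite modnn.
by rewrite modn_small //; have := ltn_ord v; lia.
Qed.

Lemma iter_ordS_val (u : 'I_n) k : val (iter k (@ordS n) u) = (u + k) %% n.
Proof.
elim: k => [|k IH] /=; first by rewrite addn0 modn_small.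
by rewrite IH -addn1 modnDml -addnA addn1.
Qed.

Lemma ordS_orientation : orientation (@ordS n).
Proof.
split.
- move=> v; rewrite -val_eqE ordS_val; have := ltn_ord v.
  by case: ifP => /eqP h /=; lia.
- move=> v; rewrite -val_eqE !ordS_val; have := ltn_ord v.
  by case: (v.+1 =P n) => h1 /=; case: ifP => /eqP h2 /=; lia.
- exact: ordS_inj.
- by [].
- move=> u v; exists (v + (n - u)); apply: val_inj; rewrite iter_ordS_val.
  have -> : u + (v + (n - u)) = v + n by have := ltn_ord u; lia.
  by rewrite modnDr modn_small.
Qed.

Lemma ord_pred_orientation : orientation (@ord_pred n).
Proof.
have [Sneq Sneq2 _ Sadj Sreach] := ordS_orientation.
have eq_pred (x y : 'I_n) : (y == ord_pred x) = (x == ordS y).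
  by rewrite -(inj_eq (@ordS_inj n)) ord_predK eq_sym.
split.
- by move=> v; rewrite eq_sym eq_pred eq_sym Sneq.
- by move=> v; apply: contra (Sneq2 v) => /eqP {1}<-; rewrite !ord_predK.
- exact: ord_pred_inj.
- by move=> x y; rewrite Sadj orbC !eq_pred.
- move=> u v; have [k <-] := Sreach v u; exists k.
  by elim: k => [//|k IH]; rewrite iterSr iterS ordSK.
Qed.

End CyclicSuccessor.

Section Orientation.
Variables (n : nat) (sg : 'I_n -> 'I_n).
Hypothesis Hsg : orientation sg.
Local Notation adj := (cyc_adj n).

Definition ed (v : 'I_n) : {set 'I_n} := [set v; sg v].

Definition oriented_matching : {set Arc 'I_n} := [set (ed v, v) | v : 'I_n].

Lemma mem_ed w v : (w \in ed v) = (w == v) || (w == sg v).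
Proof. by rewrite in_set2. Qed.

(* Distinct vertices have distinct forward edges, as sg has no 2-cycles. *)
Lemma ed_inj : injective ed.
Proof.
move=> v w evw; have : v \in ed w by rewrite -evw mem_ed eqxx.
rewrite mem_ed => /orP [/eqP //|/eqP vE]; have : w \in ed v by rewrite evw mem_ed eqxx.
rewrite mem_ed => /orP [/eqP //|/eqP wE].
by move: (orient_neq2 Hsg w); rewrite -vE -wE eqxx.
Qed.

Lemma is_arc_edP E w :
  reflect (exists v, E = ed v /\ (w = v \/ w = sg v)) (is_arc adj (E, w)).
Proof.
apply: (iffP andP) => /= [[]|[v [-> hw]]].
  rewrite inE => /existsP [x /existsP [y /andP [+ /eqP ->]]].
  rewrite (orient_adj Hsg) => /orP [] /eqP ->.
    by rewrite in_set2 => /orP [] /eqP ->; exists x; auto.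
  by rewrite in_set2 => /orP [] /eqP ->; exists y; rewrite /ed setUC; auto.
split; last by rewrite mem_ed; case: hw => ->; rewrite eqxx ?orbT.
rewrite inE; apply/existsP; exists v; apply/existsP; exists (sg v).
by rewrite (orient_adj Hsg) !eqxx.
Qed.

Section CycleThroughOrientedArc.
Variables (m : {set Arc 'I_n}) (t : seq (Node 'I_n)).
Hypotheses (hm : is_matching adj m) (ct : cycle (dedge adj m) t).

Lemma dcycle_step u : inl u \in t -> (ed u, u) \in m ->
  [/\ next t (inl u) = inr (ed u), next t (inr (ed u)) = inl (sg u),
      inl (sg u) \in t & (ed (sg u), sg u) \in m].
Proof.
move=> ut um.
have next_u : next t (inl u) = inr (ed u).
  have [E [-> _ Em]] := dcycle_next_vertex ct ut.
  by have [->] := matching_snd_inj hm Em um erefl.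
have edt : inr (ed u) \in t by rewrite -next_u mem_next.
have next_ed : next t (inr (ed u)) = inl (sg u).
  have [w [-> /is_arc_edP [v [/ed_inj <- [] ->]] wm]] := dcycle_next_edge ct edt => //.
  by rewrite um in wm.
have sgt : inl (sg u) \in t by rewrite -next_ed mem_next.
split => //.
have [E [_ /is_arc_edP [v [-> hv]] Em]] := dcycle_next_vertex ct sgt.
case: hv Em => [<- //|/(orient_inj Hsg) <- Em].
have [/eqP] := matching_fst_inj hm Em um erefl.
by rewrite (negbTE (orient_neq Hsg u)).
Qed.

(* By transitivity of sg, the cycle then visits every vertex v, and m
   contains every oriented arc (ed v, v). *)
Lemma dcycle_propagate u : inl u \in t -> (ed u, u) \in m ->
  forall v, inl v \in t /\ (ed v, v) \in m.
Proof.
move=> ut um v; have [k <-] := orient_reach Hsg u v.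
elim: k => [//|k [kt km]]; rewrite iterS.
by have [_ _ ? ?] := dcycle_step kt km.
Qed.

(* A matching containing every oriented arc is the oriented matching, since
   a matching has at most one arc per vertex. *)
Lemma oriented_matching_eq : (forall v, (ed v, v) \in m) -> m = oriented_matching.
Proof.
move=> hv; apply/eqP; rewrite eq_sym eqEcard; apply/andP; split.
  by apply/subsetP => a /imsetP [v _ ->]; exact: hv.
rewrite card_imset; last by move=> v w [].
have <- : #|[set a.2 | a in m]| = #|m|.
  by apply: card_in_imset => a b; exact: matching_snd_inj hm.
exact: max_card.
Qed.

Lemma arcs_of_full : uniq t -> (forall v, inl v \in t /\ (ed v, v) \in m) ->
  arcs_of t = [set a | is_arc adj a].
Proof.
move=> ut hv; apply/setP => a; rewrite [RHS]inE.
apply/(mem_arcs_of a ut)/idP => [[x xt]|]; first exact: dcycle_arc ct xt.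
case: a => E w /is_arc_edP [v [-> hw]].
have [vt vm] := hv v; have [next_v next_ed _ _] := dcycle_step vt vm.
case: hw => ->; first by exists (inl v); rewrite ?next_v.
by exists (inr (ed v)); rewrite ?next_ed // -next_v mem_next.
Qed.

Lemma dcycle_through_oriented_arc u : uniq t -> inl u \in t -> (ed u, u) \in m ->
  m = oriented_matching /\ arcs_of t = [set a | is_arc adj a].
Proof.
move=> ut u_t um; have hv := dcycle_propagate u_t um.
by split; [apply: oriented_matching_eq => v; case: (hv v) | exact: arcs_of_full].
Qed.

End CycleThroughOrientedArc.

Lemma oriented_matching_is_matching : is_matching adj oriented_matching.
Proof.
apply/andP; split; apply/forall_inP => _ /imsetP [v _ ->].
  by apply/is_arc_edP; exists v; auto.
apply/forall_inP => _ /imsetP [w _ ->]; apply/implyP => vw /=.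
have {}vw : v != w by apply: contra vw => /eqP ->.
by rewrite (inj_eq ed_inj) vw.
Qed.

Lemma card_oriented_matching : #|oriented_matching| = n.
Proof. by rewrite card_imset ?card_ord // => v w []. Qed.

Lemma reversed_arc_notin v : (ed v, sg v) \notin oriented_matching.
Proof.
apply/imsetP => -[w _ [/ed_inj <- /eqP]].
by rewrite (negbTE (orient_neq Hsg v)).
Qed.

(* The successor map of the 2n-cycle v -> ed v -> sg v -> ... supported by
   the oriented matching. *)
Definition cycle_succ (x : Node 'I_n) : Node 'I_n :=
  match x with
  | inl v => inr (ed v)
  | inr E => if [pick v | E == ed v] is Some v then inl (sg v) else inr E
  end.

Lemma cycle_succ_ed v : cycle_succ (inr (ed v)) = inl (sg v).
Proof.
rewrite /=; case: pickP => [w /eqP /ed_inj -> //|no_v].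
by move: (no_v v); rewrite eqxx.
Qed.

Lemma cycle_succ_inj : injective cycle_succ.
Proof.
case=> [v|E] [w|E'] /=.
- by move=> [/ed_inj ->].
- by case: pickP => [//|no_v] [vE]; move: (no_v v); rewrite -vE eqxx.
- by case: pickP => [//|no_w] [wE]; move: (no_w w); rewrite wE eqxx.
- case: pickP => [x /eqP ->|_]; case: pickP => [y /eqP ->|_] //.
  by move=> [/(orient_inj Hsg) ->].
Qed.

(* The oriented matching supports a directed cycle: the orbit of any vertex
   node under cycle_succ. *)
Lemma oriented_matching_dcycle (v0 : 'I_n) :
  exists S, is_dcycle adj oriented_matching S.
Proof.
pose t := orbit cycle_succ (inl v0).
have edge_nodes x : x \in t -> if x is inr E then exists v, E = ed v else True.
  rewrite -fconnect_orbit => /iter_findex <-.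
  elim: (findex _ _ _) => [//|k IH]; rewrite iterS.
  case: (iter k cycle_succ (inl v0)) IH => [v _|E [v ->]]; first by exists v.
  by rewrite cycle_succ_ed.
have ct : cycle (dedge adj oriented_matching) t.
  apply: (cycle_from_next (orbit_uniq _ _)) => x xt.
  have /eqP <- := next_cycle (cycle_orbit cycle_succ_inj (inl v0)) xt.
  have := edge_nodes x xt; case: x {xt} => [v _|_ [v ->]].
    rewrite /=; apply/andP; split; last by apply/imsetP; exists v.
    by apply/is_arc_edP; exists v; auto.
  rewrite cycle_succ_ed /= reversed_arc_notin andbT.
  by apply/is_arc_edP; exists v; auto.
exists (arcs_of t); apply/is_dcycleP; exists t; split => //; first exact: orbit_uniq.
by apply/eqP => t0; move: (in_orbit cycle_succ (inl v0)); rewrite -/t t0.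
Qed.

End Orientation.

Section CycleGraph.
Variable n : nat.
Hypothesis n_ge3 : 2 < n.
Local Notation adj := (cyc_adj n).
Local Notation MS := (oriented_matching (@ordS n)).
Local Notation MP := (oriented_matching (@ord_pred n)).

Let ordS_or := ordS_orientation n_ge3.
Let ord_pred_or := ord_pred_orientation n_ge3.
Let v0 : 'I_n := Ordinal (ltn_trans (isT : 0 < 2) n_ge3).

(* Every directed cycle of a matching is the set of all arcs, and the
   matching is M+ or M-, according to the orientation of the first matched
   arc met by the cycle at a vertex node. *)
Lemma dcycle_classification m S : is_matching adj m -> is_dcycle adj m S ->
  (m = MS \/ m = MP) /\ S = [set a | is_arc adj a].
Proof.
move=> hm /is_dcycleP [t [ut ct tn0 ->]].
have [u u_t] : exists u, inl u \in t.
  case: t tn0 ut ct => [//|[u|E] s] _ ut ct; first by exists u; rewrite mem_head.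
  have [w [next_E _ _]] := dcycle_next_edge ct (mem_head _ _).
  by exists w; rewrite -next_E mem_next mem_head.
have [E [_ /(is_arc_edP ordS_or) [v [-> hv]] Em]] := dcycle_next_vertex ct u_t.
case: hv Em => hv Em; subst u.
  by have [-> ->] := dcycle_through_oriented_arc ordS_or hm ct ut u_t Em; auto.
have Em' : (ed (@ord_pred n) (ordS v), ordS v) \in m by rewrite /ed ordSK setUC.
by have [-> ->] := dcycle_through_oriented_arc ord_pred_or hm ct ut u_t Em'; auto.
Qed.

Lemma J_le1 m : is_matching adj m -> J adj m <= 1.
Proof.
move=> hm; rewrite -(cards1 [set a | is_arc adj a]); apply/subset_leq_card/subsetP.
by move=> S; rewrite !inE => /(dcycle_classification hm) [_ ->].
Qed.

Lemma J_oriented sg : orientation sg -> J adj (oriented_matching sg) = 1.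
Proof.
move=> Hsg; apply/eqP; rewrite eqn_leq J_le1 ?oriented_matching_is_matching //.
have [S hS] := oriented_matching_dcycle Hsg v0.
by rewrite card_gt0; apply/set0Pn; exists S; rewrite inE.
Qed.

Lemma J_eq1 m : is_matching adj m -> J adj m = 1 -> m = MS \/ m = MP.
Proof.
move=> hm hJ; have /set0Pn [S] : [set S | is_dcycle adj m S] != set0.
  by rewrite -card_gt0 -/(J adj m) hJ.
by rewrite inE => /(dcycle_classification hm) [].
Qed.

(* The arc ({v, v+1}, v) lies in M+ but not in M-. *)
Lemma MS_neq_MP : MS != MP.
Proof.
apply/eqP => eSP; have := reversed_arc_notin ord_pred_or (ordS v0).
by rewrite -eSP /ed ordSK setUC; apply/negP/negPn/imsetP; exists v0.
Qed.

(* The basis of hH^1 is {M+, M-}, in degree n - 1 (the matchings have n arcs). *)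
Lemma hatC1 i : hatC adj 1 i = if i == n.-1 then [set MS; MP] else set0.
Proof.
have n_pos : 0 < n by exact: ltn_trans n_ge3.
apply/setP => m; rewrite inE; apply/and3P/idP => [[hm /eqP hc /eqP hJ]|].
  have hi : i = n.-1.
    by case: (J_eq1 hm hJ) hc => ->; rewrite card_oriented_matching => ->.
  by rewrite hi eqxx !inE; case: (J_eq1 hm hJ) => ->; rewrite eqxx ?orbT.
case: eqP => [->|_]; last by rewrite inE.
rewrite prednK // !inE => /orP [] /eqP ->.
  by rewrite (oriented_matching_is_matching ordS_or) card_oriented_matching
    (J_oriented ordS_or) !eqxx.
by rewrite (oriented_matching_is_matching ord_pred_or) card_oriented_matching
  (J_oriented ord_pred_or) !eqxx.
Qed.

Lemma hatC_ge2 i j : 1 < j -> hatC adj j i = set0.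
Proof.
move=> hj; apply/setP => m; rewrite !inE.
by apply/and3P => -[hm _ /eqP hJ]; move: (J_le1 hm); rewrite hJ leqNgt hj.
Qed.

End CycleGraph.

(* Filtration 0 is the complex of M(C_n) by definition (J = 0 is acyclicity);
   filtration 1 is concentrated in degree n - 1 with two basis elements;
   higher filtrations are empty. *)
Theorem mainTheorem9 (n : nat) (hn : (3 <= n)%N) :
  (forall i : nat, hH (cyc_adj n) i 0 = Hacyc (cyc_adj n) i) /\
  (forall i : nat, hH (cyc_adj n) i 1 = (if i == n.-1 then 2 else 0)%N) /\
  (forall i j : nat, (2 <= j)%N -> hH (cyc_adj n) i j = 0%N).
Proof.
split; first by [].
split => [i|i j hj]; last by apply: hdim_eq0; rewrite hatC_ge2.
case: eqP => [->|/eqP ne]; last by apply: hdim_eq0; rewrite hatC1 // (negbTE ne).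
rewrite /hH hdim_concentrated => [|j /negbTE ne]; last by rewrite hatC1 // ne.
by rewrite hatC1 // eqxx cards2 MS_neq_MP.
Qed.
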